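(* Let $n\ge2$, $\boldsymbol{\lambda}=(\lambda_1,\dots,\lambda_n)$ a vector of positive integers, $\ell=\mathrm{lcm}(\lambda_1,\dots,\lambda_{n-1})$, $\boldsymbol{\lambda}'=(\lambda_1,\dots,\lambda_{n-1},\lambda_n+\ell)$, and suppose $\lambda_n\ge\ell$. Let $(a_1,\dots,a_{n-1},a_n',d)$ be a minimal generator of $M(\boldsymbol{\lambda}')$ of type (4), and set $\delta=d\ell-\frac{\ell}{\lambda_1}a_1-\cdots-\frac{\ell}{\lambda_{n-1}}a_{n-1}$. Then $(a_1,\dots,a_{n-1},a_n'-\delta,d)$ is a minimal generator of $M(\boldsymbol{\lambda})$ of type (4).
   Context: For a vector $\boldsymbol{\mu}$ of $n$ positive integers, $M(\boldsymbol{\mu})=\{(a_1,\dots,a_n,d)\in\mathbb{N}^{n+1}\mid a_1/\mu_1+\cdots+a_n/\mu_n\ge d\}$. A minimal generator of $M(\boldsymbol{\mu})$ is a nonzero element that cannot be written as the sum of two nonzero elements of $M(\boldsymbol{\mu})$. A minimal generator $(a_1,\dots,a_n,d)$ is of type (4) if $d>0$ and $a_ia_n>0$ for some $1\le i<n$. (Equivalently, $(a_1,\dots,a_{n-1},a_n'-\delta,d)=f^{-1}(a_1,\dots,a_{n-1},a_n',d)$ for the group automorphism $f(u_1,\dots,u_{n+1})=(u_1,\dots,u_{n-1},u_n+u_{n+1}\ell-\sum_{i<n}\frac{\ell}{\lambda_i}u_i,u_{n+1})$ of $\mathbb{Z}^{n+1}$.) *)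

From HB Require Import structures.
From mathcomp Require Import all_boot all_order all_algebra.
Set Implicit Arguments. Unset Strict Implicit. Unset Printing Implicit Defensive.
Import Order.TTheory GRing.Theory Num.Theory.

(* Elements of N^{n+1} are pairs (a, d) with a : {ffun 'I_n -> nat}
   (coordinates a_1..a_n, indexed 0..n-1) and d : nat. *)
Definition elt (n : nat) := ({ffun 'I_n -> nat} * nat)%type.

Definition inM (n : nat) (mu : {ffun 'I_n -> nat}) (x : elt n) : Prop :=
  ((x.2)%:R <= \sum_(i < n) ((x.1 i)%:R / (mu i)%:R : rat))%R.

Definition is_zero (n : nat) (x : elt n) : Prop :=
  (forall i, x.1 i = 0) /\ x.2 = 0.

Definition is_sum (n : nat) (x y z : elt n) : Prop :=
  (forall i, x.1 i = y.1 i + z.1 i) /\ x.2 = y.2 + z.2.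

Definition minimal_generator (n : nat) (mu : {ffun 'I_n -> nat}) (x : elt n) : Prop :=
  inM mu x /\ ~ is_zero x /\
  ~ (exists y z : elt n, inM mu y /\ inM mu z /\ ~ is_zero y /\ ~ is_zero z /\ is_sum x y z).

Definition type4 (n : nat) (x : elt n) : Prop :=
  0 < x.2 /\
  exists i j : 'I_n, i < n.-1 /\ (j : nat) = n.-1 /\ 0 < x.1 i * x.1 j.

Definition lcm_init (n : nat) (lam : {ffun 'I_n -> nat}) : nat :=
  \big[lcmn/1]_(i < n | (i < n.-1)%N) lam i.

Definition lam_prime (n : nat) (lam : {ffun 'I_n -> nat}) : {ffun 'I_n -> nat} :=
  [ffun i : 'I_n => if (i : nat) == n.-1 then lam i + lcm_init lam else lam i].

Definition delta (n : nat) (lam : {ffun 'I_n -> nat}) (x : elt n) : int :=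
  ((x.2 * lcm_init lam)%:Z - (\sum_(i < n | (i < n.-1)%N) (lcm_init lam %/ lam i) * x.1 i)%:Z)%R.

From HB Require Import structures.
From mathcomp Require Import all_boot all_order all_algebra.
From mathcomp Require Import zify ring.
Import Order.TTheory GRing.Theory Num.Theory.
Set Implicit Arguments. Unset Strict Implicit. Unset Printing Implicit Defensive.

(* Write δ(u) = d ℓ - Σ_{i<n} (ℓ/λ_i) a_i for u = (a, d).  For any μ that agrees
   with λ off the last coordinate, u ∈ M(μ) iff δ(u) μ_n ≤ a_n ℓ; in particular,
   when δ(u) ≥ 0, u ∈ M(λ) iff u + δ(u) e_n ∈ M(λ'), and δ is additive.
   Minimality of x in M(λ') gives x - e_n ∉ M(λ'), whence δ(x) > 0 and
   (a_n' - δ) ℓ < δ λ_n + ℓ.  Because ℓ ≤ λ_n, this bound prevents any summand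
   of b = x - δ e_n lying in M(λ) from having defect larger than δ, so both
   summands of a decomposition of b have nonnegative defect and lift to a
   decomposition of x. *)

Lemma ler_add_divE (d p a L m : rat) : (0 < L)%R -> (0 < m)%R ->
  (d <= p / L + a / m)%R = ((d * L - p) * m <= a * L)%R.
Proof.
move=> L_gt0 m_gt0.
have E : ((p / L + a / m - d) * (L * m) = a * L - (d * L - p) * m)%R.
  by field; rewrite gt_eqF ?gt_eqF.
by rewrite -[LHS]subr_ge0 -[RHS]subr_ge0 -(pmulr_lge0 _ (mulr_gt0 L_gt0 m_gt0)) E.
Qed.

Definition set_coord (n : nat) (a : {ffun 'I_n -> nat}) (k : 'I_n) (v : nat) :
  {ffun 'I_n -> nat} := [ffun i => if i == k then v else a i].

Lemma set_coord_eq n (a : {ffun 'I_n -> nat}) k v : set_coord a k v k = v.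
Proof. by rewrite ffunE eqxx. Qed.

Lemma set_coord_neq n (a : {ffun 'I_n -> nat}) k v i :
  i != k -> set_coord a k v i = a i.
Proof. by rewrite ffunE => /negbTE ->. Qed.

Lemma minimal_generator_pred_coord n (mu : {ffun 'I_n -> nat}) (x : elt n) k :
    minimal_generator mu x -> 0 < x.2 -> 0 < x.1 k ->
  ~ inM mu (set_coord x.1 k (x.1 k).-1, x.2).
Proof.
move=> [_ [_ x_min]] d_gt0 xk_gt0 predM; apply: x_min.
exists (set_coord x.1 k (x.1 k).-1, x.2), ([ffun i => (i == k) : nat], 0).
split=> //; split; first by rewrite /inM /= sumr_ge0 // => i _; rewrite divr_ge0.
split; first by case=> _ /= d0; rewrite d0 in d_gt0.
split; first by case=> /(_ k) /=; rewrite ffunE eqxx.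
split=> [i|] /=; last by rewrite addn0.
rewrite !ffunE; case: eqP => [-> | _]; last by rewrite addn0.
by rewrite addn1 prednK.
Qed.

Lemma last_defect_bounds (e : int) (A : nat) (m L : int) :
    0 < A -> (0 < L)%R -> (0 < m)%R ->
    (e * (m + L) <= A%:Z * L)%R -> ~ (e * (m + L) <= (A.-1)%:Z * L)%R ->
  [/\ 0 < e, e < A%:Z & (A%:Z - e) * L < e * m + L]%R.
Proof. by case: A => // A *; split; nia. Qed.

Section LastCoordinate.

Variables (n : nat) (lam : {ffun 'I_n -> nat}) (j : 'I_n).
Hypothesis lam_gt0 : forall i, 0 < lam i.
Hypothesis j_last : (j : nat) = n.-1.

Local Notation L := (lcm_init lam).

Lemma lcm_init_gt0 : 0 < L.
Proof.
apply: (big_ind (fun m => 0 < m)) => // a b a_gt0 b_gt0.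
by rewrite lcmn_gt0 a_gt0.
Qed.

Lemma neq_last (i : 'I_n) : (i != j) = (i < n.-1).
Proof. by have := ltn_ord i; rewrite -val_eqE /= j_last; lia. Qed.

Definition weighted_init (a : {ffun 'I_n -> nat}) : nat :=
  \sum_(i < n | i < n.-1) (L %/ lam i) * a i.

Lemma sum_init_ratE (mu a : {ffun 'I_n -> nat}) :
    (forall i : 'I_n, i < n.-1 -> mu i = lam i) ->
  (\sum_(i < n | i != j) ((a i)%:R / (mu i)%:R : rat) = (weighted_init a)%:R / L%:R)%R.
Proof.
move=> mu_init; rewrite /weighted_init natr_sum mulr_suml.
apply: eq_big => [i | i]; first by rewrite neq_last.
rewrite neq_last => i_init; rewrite mu_init // natrM.
have /dvdnP[q L_eq] : lam i %| L by apply: (biglcmn_sup i).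
have q_gt0 : 0 < q by move: lcm_init_gt0; rewrite L_eq muln_gt0 => /andP[].
rewrite L_eq mulnK // natrM; field.
by rewrite !pnatr_eq0 -!lt0n q_gt0 lam_gt0.
Qed.

Lemma inM_lastE (mu : {ffun 'I_n -> nat}) (u : elt n) :
    (forall i : 'I_n, i < n.-1 -> mu i = lam i) -> 0 < mu j ->
  inM mu u <-> (delta lam u * (mu j)%:Z <= (u.1 j)%:Z * L%:Z)%R.
Proof.
move=> mu_init mu_j_gt0; rewrite /inM (bigD1 j) //= sum_init_ratE // addrC.
rewrite ler_add_divE ?ltr0n ?lcm_init_gt0 // -(ler_int rat) /delta.
by rewrite !(rmorphM, rmorphB).
Qed.

Lemma lam_prime_init (i : 'I_n) : i < n.-1 -> lam_prime lam i = lam i.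
Proof. by move=> i_init; rewrite ffunE ltn_eqF. Qed.

Lemma lam_prime_last : lam_prime lam j = lam j + L.
Proof. by rewrite ffunE j_last eqxx. Qed.

Lemma inM_lamE (u : elt n) :
  inM lam u <-> (delta lam u * (lam j)%:Z <= (u.1 j)%:Z * L%:Z)%R.
Proof. exact: inM_lastE. Qed.

Lemma inM_lam_primeE (u : elt n) :
  inM (lam_prime lam) u <-> (delta lam u * (lam j + L)%:Z <= (u.1 j)%:Z * L%:Z)%R.
Proof.
rewrite -lam_prime_last; apply: inM_lastE; first exact: lam_prime_init.
by rewrite lam_prime_last addn_gt0 lam_gt0.
Qed.

Lemma weighted_init_set_last a v : weighted_init (set_coord a j v) = weighted_init a.
Proof. by apply: eq_bigr => i; rewrite -neq_last => /set_coord_neq ->. Qed.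

Lemma delta_set_last (u : elt n) v : delta lam (set_coord u.1 j v, u.2) = delta lam u.
Proof. by rewrite /delta /= -/(weighted_init _) weighted_init_set_last. Qed.

Lemma delta_sum (x y z : elt n) : is_sum x y z ->
  delta lam x = (delta lam y + delta lam z)%R.
Proof.
move=> [a_sum d_sum]; rewrite /delta -!/(weighted_init _).
have -> : weighted_init x.1 = weighted_init y.1 + weighted_init z.1.
  by rewrite -big_split; apply: eq_bigr => i _; rewrite a_sum mulnDr.
rewrite d_sum; lia.
Qed.

(* The automorphism f of the statement, with |δ| for δ: they agree where it is used. *)
Definition lift_last (u : elt n) : elt n :=
  (set_coord u.1 j (u.1 j + `|delta lam u|%N), u.2).

Lemma delta_lift_last u : delta lam (lift_last u) = delta lam u.
Proof. exact: delta_set_last. Qed.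

Lemma inM_lift_last u : (0 <= delta lam u)%R ->
  inM (lam_prime lam) (lift_last u) <-> inM lam u.
Proof.
move=> delta_ge0; rewrite inM_lam_primeE inM_lamE delta_lift_last set_coord_eq.
by split => /= ?; lia.
Qed.

Lemma lift_last_nonzero u : ~ is_zero u -> ~ is_zero (lift_last u).
Proof.
move=> u_nz [/= a0 d0]; apply: u_nz; split=> // i.
by have := a0 i; rewrite ffunE; case: eqP => [-> | _] //; lia.
Qed.

Lemma is_sum_lift_last x y z : is_sum x y z ->
    (0 <= delta lam y)%R -> (0 <= delta lam z)%R ->
  is_sum (lift_last x) (lift_last y) (lift_last z).
Proof.
move=> xyz y_ge0 z_ge0; have delta_x := delta_sum xyz.
case: xyz => a_sum d_sum; split=> // i /=; rewrite !ffunE.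
by case: eqP => _; rewrite a_sum; lia.
Qed.

Definition lower_last (u : elt n) : elt n :=
  (set_coord u.1 j `|((u.1 j)%:Z - delta lam u)%R|%N, u.2).

Lemma delta_lower_last u : delta lam (lower_last u) = delta lam u.
Proof. exact: delta_set_last. Qed.

Lemma lower_last_last u : (0 <= delta lam u <= (u.1 j)%:Z)%R ->
  (((lower_last u).1 j)%:Z = (u.1 j)%:Z - delta lam u)%R.
Proof. by move=> /andP[delta_ge0 delta_le]; rewrite set_coord_eq gez0_abs ?subr_ge0. Qed.

Lemma lift_lower_last u : (0 <= delta lam u <= (u.1 j)%:Z)%R ->
  lift_last (lower_last u) = u.
Proof.
move=> delta_bounds; rewrite /lift_last delta_lower_last.
apply: injective_projections => //=; apply/ffunP => i; rewrite ffunE.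
case: eqP => [-> | /eqP /set_coord_neq //].
apply/eqP; rewrite -eqz_nat PoszD lower_last_last // gez0_abs ?subrK //.
by case/andP: delta_bounds.
Qed.

Lemma minimal_generator_lam_prime_bounds x :
    minimal_generator (lam_prime lam) x -> 0 < x.2 -> 0 < x.1 j ->
  [/\ 0 < delta lam x, delta lam x < (x.1 j)%:Z
    & ((x.1 j)%:Z - delta lam x) * L%:Z < delta lam x * (lam j)%:Z + L%:Z]%R.
Proof.
move=> x_gen d_gt0 a_gt0.
have xM := (inM_lam_primeE x).1 x_gen.1.
have x_pred := minimal_generator_pred_coord x_gen d_gt0 a_gt0.
rewrite inM_lam_primeE /= delta_set_last set_coord_eq in x_pred.
rewrite !PoszD in x_pred xM.
apply: last_defect_bounds a_gt0 _ _ xM x_pred; rewrite ltz_nat ?lam_gt0 //.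
exact: lcm_init_gt0.
Qed.

Hypothesis lcm_init_le_last : L <= lam j.

Lemma delta_summand_le (b z : elt n) :
    ((b.1 j)%:Z * L%:Z < delta lam b * (lam j)%:Z + L%:Z)%R ->
    inM lam z -> z.1 j <= b.1 j ->
  (delta lam z <= delta lam b)%R.
Proof.
(* δ(z) λ_n ≤ z_n ℓ ≤ b_n ℓ < δ(b) λ_n + ℓ ≤ (δ(b) + 1) λ_n *)
move=> b_bound /inM_lamE zM z_le; have L_gt0 := lcm_init_gt0; nia.
Qed.

Lemma minimal_generator_of_lift_last b : ~ is_zero b -> (0 <= delta lam b)%R ->
    ((b.1 j)%:Z * L%:Z < delta lam b * (lam j)%:Z + L%:Z)%R ->
    minimal_generator (lam_prime lam) (lift_last b) ->
  minimal_generator lam b.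
Proof.
move=> b_nz delta_ge0 b_bound [liftM [_ lift_min]].
split; first exact/(inM_lift_last delta_ge0).
split=> // -[y [z [yM [zM [y_nz [z_nz byz]]]]]].
have delta_b := delta_sum byz.
have [a_sum _] := byz.
have y_le : y.1 j <= b.1 j by rewrite a_sum leq_addr.
have z_le : z.1 j <= b.1 j by rewrite a_sum leq_addl.
have delta_y := delta_summand_le b_bound yM y_le.
have delta_z := delta_summand_le b_bound zM z_le.
have y_ge0 : (0 <= delta lam y)%R by lia.
have z_ge0 : (0 <= delta lam z)%R by lia.
apply: lift_min; exists (lift_last y), (lift_last z).
rewrite !inM_lift_last //; split=> //; split=> //.
by split; [|split]; [exact: lift_last_nonzero.. | exact: is_sum_lift_last].
Qed.

End LastCoordinate.

Theorem proposition5p7 (n : nat) (hn : 2 <= n) (lam : {ffun 'I_n -> nat})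
  (hpos : forall i, 0 < lam i)
  (hbig : forall j : 'I_n, (j : nat) = n.-1 -> lcm_init lam <= lam j)
  (x : elt n)
  (hgen : minimal_generator (lam_prime lam) x) (h4 : type4 x) :
  exists b : {ffun 'I_n -> nat},
    (forall i : 'I_n, i < n.-1 -> b i = x.1 i) /\
    (forall i : 'I_n, (i : nat) = n.-1 -> ((b i)%:Z = (x.1 i)%:Z - delta lam x)%R) /\
    minimal_generator lam (b, x.2) /\ type4 (b, x.2).
Proof.
case: h4 => d_gt0 [i0 [j [i0_init [j_last a_gt0]]]].
have [a_i0_gt0 a_j_gt0] : 0 < x.1 i0 /\ 0 < x.1 j by apply/andP; rewrite -muln_gt0.
have [delta_gt0 delta_lt b_bound] :=
  minimal_generator_lam_prime_bounds hpos j_last hgen d_gt0 a_j_gt0.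
have delta_bounds : (0 <= delta lam x <= (x.1 j)%:Z)%R by rewrite !ltW.
have b_j := lower_last_last delta_bounds.
have delta_b := delta_lower_last lam j_last x.
exists (lower_last lam j x).1; split; [|split; [|split]].
- by move=> i i_init; rewrite set_coord_neq // (neq_last j_last).
- by move=> i i_last; rewrite (_ : i = j) //; apply: val_inj; rewrite /= i_last.
- apply: (minimal_generator_of_lift_last hpos j_last (hbig _ j_last)).
  + by case=> _ /= d0; rewrite d0 in d_gt0.
  + by rewrite delta_b ltW.
  + by rewrite delta_b b_j.
  + by rewrite lift_lower_last.
- split=> //; exists i0, j; do 2!split=> //=.
  rewrite set_coord_neq ?(neq_last j_last) // muln_gt0 a_i0_gt0.
  by rewrite -ltz_nat b_j subr_gt0.
Qed.
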